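(* Consider the decentralized setting of the context. Assume that whenever $(j,s)\in\mathcal S^i_t$ one has $|\mathcal S^j_s|<|\mathcal S^i_t|$, that the maximum delay is bounded by $\tau$, and that all loss functions $f^i_t$ are $G$-Lipschitz with respect to $\|\cdot\|$. Then for any $p\in\mathcal X$ with $h(p)\le r^2$, D-DDA with stepsizes \[\eta^i_t=\frac{r}{G\sqrt{(5\tau+3)\big(|\mathcal S^i_t|+(\tau+1)M_{\max}\big)M_{\max}}}\] guarantees a collective regret $R^{g}_T(p)=O\big(\sqrt{\tau N M_{\max}}\big)$, for any choice of reference indices $j_t$.
   Context: Let $\mathcal V$ be a finite-dimensional real vector space with norm $\|\cdot\|$ and dual norm $\|\cdot\|_*$, and $\mathcal X\subset\mathcal V$ closed convex. A regularizer $h:\mathcal V\to\mathbb R\cup\{+\infty\}$ is lower semicontinuous, $1$-strongly convex w.r.t. $\|\cdot\|$ on $\mathcal X$, with $\mathcal X\subset\operatorname{dom}h$, whose subdifferential admits a continuous selection, and $h\ge0$. Decentralized protocol: at each time $t=1,\dots,T$, $M_t\ge1$ agents are active, labelled $1,\dots,M_t$; agent $i$ plays $x^i_t\in\mathcal X$ against a convex loss $f^i_t$ (with $\mathcal X\subset\operatorname{dom}\partial f^i_t$) and the subgradient $g^i_t\in\partial f^i_t(x^i_t)$ is later shared. $\mathcal S^i_t\subset\{(j,s):1\le s\le t-1,\ 1\le j\le M_s\}$ is the set of (agent, time) indices of the feedback used for playing $x^i_t$. D-DDA: $x^i_t=\arg\min_{x\in\mathcal X}\{\sum_{(j,s)\in\mathcal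 S^i_t}\langle g^j_s,x\rangle+h(x)/\eta^i_t\}$. Maximum delay bounded by $\tau$: for all $t$, $i$, every $s\le t-\tau-1$ and $j\le M_s$, $(j,s)\in\mathcal S^i_t$. $M_{\max}=\max_tM_t$, $N=\sum_{t=1}^TM_t$. Collective regret with reference agents $j_t\in\{1,\dots,M_t\}$: $R^{g}_T(p)=\sum_{t=1}^T\sum_{i=1}^{M_t}f^i_t(x^{j_t}_t)-\sum_{t=1}^T\sum_{i=1}^{M_t}f^i_t(p)$. *)

From HB Require Import structures.
From mathcomp Require Import all_boot all_order all_algebra.
From mathcomp Require Import reals constructive_ereal.
Set Implicit Arguments. Unset Strict Implicit. Unset Printing Implicit Defensive.
Import Order.TTheory GRing.Theory Num.Theory.
Local Open Scope ring_scope.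

Section Defs.
Variables (R : realType) (n : nat).
Notation V := 'rV[R]_n.

(* The finite-dimensional space V is modelled as R^n (row vectors); the dual
   space is identified with V through the standard pairing. *)
Definition dot (g x : V) : R := \sum_(k < n) g 0 k * x 0 k.

Definition is_norm (nrm : V -> R) : Prop :=
  [/\ forall x, 0 <= nrm x,
      forall x, nrm x = 0 -> x = 0,
      forall (a : R) x, nrm (a *: x) = `|a| * nrm x
    & forall x y, nrm (x + y) <= nrm x + nrm y].

Definition convex_set (X : V -> Prop) : Prop :=
  forall x y (l : R), X x -> X y -> 0 <= l <= 1 -> X (l *: x + (1 - l) *: y).

Definition closed_set (nrm : V -> R) (X : V -> Prop) : Prop :=
  forall x, (forall e : R, 0 < e -> exists y, X y /\ nrm (x - y) < e) -> X x.

Definition lsc (nrm : V -> R) (h : V -> \bar R) : Prop :=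
  forall x (a : R), (a%:E < h x)%E ->
    exists d : R, 0 < d /\ forall y, nrm (y - x) < d -> (a%:E < h y)%E.

(* 1-strong convexity of h on X w.r.t. nrm (h is finite on X) *)
Definition strongly_convex_on (nrm : V -> R) (X : V -> Prop) (h : V -> \bar R) :=
  forall x y (l : R), X x -> X y -> 0 <= l <= 1 ->
    (h (l *: x + (1 - l) *: y)%R <=
       (l * fine (h x) + (1 - l) * fine (h y)
        - l * (1 - l) / 2 * nrm (x - y) ^+ 2)%R%:E)%E.

Definition subgrad_ext (h : V -> \bar R) (x s : V) : Prop :=
  forall y, (h x + (dot s (y - x)%R)%:E <= h y)%E.

Definition cont_selection (nrm : V -> R) (X : V -> Prop) (h : V -> \bar R) :=
  exists sel : V -> V,
    let Xo := fun x => X x /\ exists s, subgrad_ext h x s in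
    (forall x, Xo x -> subgrad_ext h x (sel x)) /\
    (forall x, Xo x -> forall e : R, 0 < e -> exists d : R, 0 < d /\
       forall y, Xo y -> nrm (y - x) < d -> nrm (sel y - sel x) < e).

Definition regularizer (nrm : V -> R) (X : V -> Prop) (h : V -> \bar R) :=
  [/\ lsc nrm h, strongly_convex_on nrm X h,
      (forall x, X x -> (h x < +oo)%E),
      cont_selection nrm X h
    & forall x, (0 <= h x)%E].

Definition convex_fun (f : V -> R) : Prop :=
  forall x y (l : R), 0 <= l <= 1 ->
    f (l *: x + (1 - l) *: y) <= l * f x + (1 - l) * f y.

Definition lipschitz (nrm : V -> R) (G : R) (f : V -> R) : Prop :=
  forall x y, `|f x - f y| <= G * nrm (x - y).

Definition subgrad (f : V -> R) (x g : V) : Prop :=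
  forall y, f x + dot g (y - x) <= f y.

End Defs.

(* Protocol bookkeeping: times t = 1..T, agents i = 1..M t.
   S i t : pred (nat * nat) is the set of pairs (j, s) used by agent i at t. *)

Definition valid_pairs (M : nat -> nat) (t : nat) (js : nat * nat) : bool :=
  (1 <= js.2 <= t.-1)%N && (1 <= js.1 <= M js.2)%N.

Definition cardS (M : nat -> nat) (S : nat -> nat -> pred (nat * nat))
  (i t : nat) : nat :=
  (\sum_(1 <= s < t) \sum_(1 <= j < (M s).+1) (S i t (j, s) : nat))%N.

Definition feedback_sum (R : realType) (n : nat) (M : nat -> nat)
  (S : nat -> nat -> pred (nat * nat)) (g : nat -> nat -> 'rV[R]_n)
  (i t : nat) : 'rV[R]_n :=
  \sum_(1 <= s < t) \sum_(1 <= j < (M s).+1) (if S i t (j, s) then g j s else 0).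

Definition Mmax (M : nat -> nat) (T : nat) : nat :=
  (\max_(1 <= t < T.+1) M t)%N.

Definition Ntot (M : nat -> nat) (T : nat) : nat :=
  (\sum_(1 <= t < T.+1) M t)%N.

Definition collective_regret (R : realType) (n : nat) (T : nat) (M : nat -> nat)
  (f : nat -> nat -> 'rV[R]_n -> R) (x : nat -> nat -> 'rV[R]_n)
  (jt : nat -> nat) (p : 'rV[R]_n) : R :=
  \sum_(1 <= t < T.+1) \sum_(1 <= i < (M t).+1) (f i t (x (jt t) t) - f i t p).

From HB Require Import structures.
From mathcomp Require Import all_boot all_order all_algebra.
From mathcomp Require Import reals constructive_ereal classical_sets.
From mathcomp Require Import ring lra zify.
Set Implicit Arguments. Unset Strict Implicit. Unset Printing Implicit Defensive.
Import Order.TTheory GRing.Theory Num.Theory.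
Local Open Scope ring_scope.

(* Each agent is compared with a virtual centralized learner which, at time t,
   plays an approximate minimizer z_t of <U_t, y> + h(y) / beta_t, where U_t sums
   all the gradients of times < t and beta_t is the D-DDA stepsize evaluated at
   their number.  The objective of agent i differs from this one only through
   the at most tau Mmax gradients it has not yet received and through the
   stepsize gap eta^i_t - beta_t, which is controlled by the same count; by
   strong convexity of h the two minimizers are O(G beta_t tau Mmax) apart.
   The centralized learner satisfies the be-the-leader bound for decreasing
   stepsizes, the Lipschitz property transfers it to the agents, and
   sum_t M_t beta_t telescopes to O(sqrt N). *)

Section DotProduct.
Variables (R : realType) (n : nat).
Implicit Types (w x y : 'rV[R]_n).

Lemma dotDl w1 w2 x : dot (w1 + w2) x = dot w1 x + dot w2 x.
Proof. by rewrite /dot -big_split; apply: eq_bigr => k _; rewrite mxE mulrDl. Qed.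

Lemma dotDr w x y : dot w (x + y) = dot w x + dot w y.
Proof. by rewrite /dot -big_split; apply: eq_bigr => k _; rewrite mxE mulrDr. Qed.

Lemma dotZl a w x : dot (a *: w) x = a * dot w x.
Proof. by rewrite /dot mulr_sumr; apply: eq_bigr => k _; rewrite mxE mulrA. Qed.

Lemma dotZr a w x : dot w (a *: x) = a * dot w x.
Proof. by rewrite /dot mulr_sumr; apply: eq_bigr => k _; rewrite mxE mulrCA. Qed.

Lemma dotNl w x : dot (- w) x = - dot w x.
Proof. by rewrite -scaleN1r dotZl mulN1r. Qed.

Lemma dotNr w x : dot w (- x) = - dot w x.
Proof. by rewrite -scaleN1r dotZr mulN1r. Qed.

Lemma dotBr w x y : dot w (x - y) = dot w x - dot w y.
Proof. by rewrite dotDr dotNr. Qed.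

Lemma dot0l x : dot 0 x = 0.
Proof. by rewrite /dot big1 // => k _; rewrite mxE mul0r. Qed.

Lemma dot_suml (I : Type) (s : seq I) (P : pred I) (F : I -> 'rV[R]_n) x :
  dot (\sum_(i <- s | P i) F i) x = \sum_(i <- s | P i) dot (F i) x.
Proof. by elim/big_rec2: _ => [|i a b _ <-]; rewrite ?dot0l ?dotDl. Qed.

End DotProduct.

Section DualNorm.
Variables (R : realType) (n : nat) (nrm : 'rV[R]_n -> R).
Hypothesis nrm_norm : is_norm nrm.

Lemma nrm_ge0 v : 0 <= nrm v.
Proof. by case: nrm_norm. Qed.

Lemma nrmN v : nrm (- v) = nrm v.
Proof. by case: nrm_norm => _ _ nrmZ _; rewrite -scaleN1r nrmZ normrN1 mul1r. Qed.

Lemma nrm_distC x y : nrm (x - y) = nrm (y - x).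
Proof. by rewrite -nrmN opprB. Qed.

Lemma ler_nrmD x y : nrm (x + y) <= nrm x + nrm y.
Proof. by case: nrm_norm. Qed.

Definition dual_bounded (w : 'rV[R]_n) (E : R) := forall v, dot w v <= E * nrm v.

Lemma dual_boundedD w1 w2 E1 E2 :
  dual_bounded w1 E1 -> dual_bounded w2 E2 -> dual_bounded (w1 + w2) (E1 + E2).
Proof. by move=> H1 H2 v; rewrite dotDl mulrDl lerD. Qed.

Lemma dual_boundedZ a w E :
  0 <= a -> dual_bounded w E -> dual_bounded (a *: w) (a * E).
Proof. by move=> a0 H v; rewrite dotZl -mulrA ler_wpM2l. Qed.

Lemma dual_boundedN w E : dual_bounded w E -> dual_bounded (- w) E.
Proof. by move=> H v; rewrite dotNl -dotNr -(nrmN v). Qed.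

Lemma dual_bounded_le w E E' : E <= E' -> dual_bounded w E -> dual_bounded w E'.
Proof. by move=> EE' H v; apply: le_trans (H v) _; rewrite ler_wpM2r ?nrm_ge0. Qed.

Lemma dual_bounded_sum (I : Type) (s : seq I) (P : pred I) (F : I -> 'rV[R]_n)
    (E : I -> R) :
  (forall i, P i -> dual_bounded (F i) (E i)) ->
  dual_bounded (\sum_(i <- s | P i) F i) (\sum_(i <- s | P i) E i).
Proof.
move=> H; elim/big_rec2: _ => [v|i w1 E1 Pi]; last exact/dual_boundedD/H.
by rewrite dot0l mul0r.
Qed.

Lemma subgrad_lipschitz_dual_bounded (G : R) (f : 'rV[R]_n -> R) x g :
  lipschitz nrm G f -> subgrad f x g -> dual_bounded g G.
Proof.
move=> f_lip g_sub v; have := g_sub (x + v); have := f_lip (x + v) x.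
have -> : x + v - x = v by rewrite addrC addKr.
have := ler_norm (f (x + v) - f x); lra.
Qed.

End DualNorm.

Lemma young_quad (R : realFieldType) (D d b c : R) :
  0 < b -> d ^+ 2 <= 4 * b * c -> D * d <= b * D ^+ 2 + c.
Proof.
move=> b0 dc; rewrite -(ler_pM2l (_ : 0 < 4 * b)) ?mulr_gt0 //.
have := sqr_ge0 (2 * b * D - d); nra.
Qed.

Lemma ler_of_slack (R : realFieldType) (x y Q : R) :
  0 <= Q -> (forall s, 0 < s <= 1 -> x <= y + s * Q) -> x <= y.
Proof.
move=> Q0 x_le; apply/ler_addgt0Pr => e e0.
have Qe0 : 0 < Q + e by lra.
have s01 : 0 < e / (Q + e) <= 1 by rewrite divr_gt0 // ler_pdivrMr //; lra.
apply: le_trans (x_le _ s01) _; rewrite lerD2l mulrAC ler_pdivrMr //; nra.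
Qed.

Definition approx_min (R : realType) (T : Type) (X : T -> Prop) (phi : T -> R)
  (eps : R) (z : T) : Prop := X z /\ forall y, X y -> phi z <= phi y + eps.

Lemma exists_approx_min (R : realType) (T : Type) (X : T -> Prop) (phi : T -> R)
    (eps L : R) (y0 : T) :
  0 < eps -> X y0 -> (forall y, X y -> L <= phi y) ->
  exists z, approx_min X phi eps z.
Proof.
move=> eps0 Xy0 phiL.
pose E r := exists2 y, X y & r = - phi y.
have supE : has_sup E.
  split; first by exists (- phi y0), y0.
  by exists (- L) => _ [y Xy ->]; rewrite lerN2 phiL.
have [_ [z Xz ->] ltz] := sup_adherent eps0 supE.
exists z; split=> // y Xy.
have : - phi y <= sup E by apply: sup_upper_bound => //; exists y.
lra.
Qed.

Definition dual_avg_obj (R : realType) (n : nat) (h : 'rV[R]_n -> \bar R)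
  (w : 'rV[R]_n) (b : R) (y : 'rV[R]_n) : R := dot w y + fine (h y) / b.

Lemma mulr_dual_avg_obj (R : realType) (n : nat) (h : 'rV[R]_n -> \bar R) w y b :
  0 < b -> b * dual_avg_obj h w b y = b * dot w y + fine (h y).
Proof. by move=> b0; rewrite /dual_avg_obj mulrDr mulrCA divff ?mulr1 ?lt0r_neq0. Qed.

Section Regularizer.
Variables (R : realType) (n : nat) (nrm : 'rV[R]_n -> R) (X : 'rV[R]_n -> Prop)
  (h : 'rV[R]_n -> \bar R).
Hypotheses (nrm_norm : is_norm nrm) (X_convex : convex_set X)
  (h_reg : regularizer nrm X h).

Lemma fine_h_ge0 y : 0 <= fine (h y).
Proof. by case: h_reg => _ _ _ _ h_ge0; apply: fine_ge0. Qed.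

Lemma h_fineK y : X y -> h y = (fine (h y))%:E.
Proof.
by case: h_reg => _ _ h_fin _ h_ge0 Xy; rewrite fineK // ge0_fin_numE ?h_fin.
Qed.

Lemma fine_h_mid_le y z : X y -> X z ->
  fine (h (2^-1 *: y + (1 - 2^-1) *: z))
    <= 2^-1 * fine (h y) + 2^-1 * fine (h z) - 8^-1 * nrm (y - z) ^+ 2.
Proof.
move=> Xy Xz; have l12 : 0 <= (2^-1 : R) <= 1 by apply/andP; split; lra.
case: h_reg => _ h_sc _ _ _; have := h_sc _ _ _ Xy Xz l12.
rewrite h_fineK ?lee_fin; last exact: X_convex.
have -> : 1 - 2^-1 = 2^-1 :> R by field.
suff -> : 2^-1 * 2^-1 / 2 = 8^-1 :> R by [].
by field.
Qed.

(* The midpoint of [y] and an approximate minimizer [z] is almost as good as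
   [z], and strong convexity makes it better by [|y - z|^2 / 8b]. *)
Lemma approx_min_growth w b eps z y :
  0 < b -> approx_min X (dual_avg_obj h w b) eps z -> X y ->
  nrm (y - z) ^+ 2
    <= 4 * b * (dual_avg_obj h w b y - dual_avg_obj h w b z + 2 * eps).
Proof.
move=> b0 [Xz zmin] Xy.
have l12 : 0 <= (2^-1 : R) <= 1 by apply/andP; split; lra.
have := zmin _ (X_convex Xy Xz l12); have := fine_h_mid_le Xy Xz.
rewrite /dual_avg_obj dotDr !dotZr.
set hm := fine (h _); set hy := fine (h y); set hz := fine (h z).
have bK u : b * (u / b) = u by rewrite mulrCA divff ?mulr1 ?lt0r_neq0.
have := bK hm; have := bK hy; have := bK hz.
have -> : 1 - 2^-1 = 2^-1 :> R by field.
move=> ? ? ? hmid zle; have := ler_wpM2l (ltW b0) zle.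
nra.
Qed.

(* Adding the two growth inequalities cancels the values of [h]; what remains
   is controlled by the dual norm of [eta u - b U]. *)
Lemma approx_min_dist_le u U x z eta b eps s E :
  0 < eta -> 0 < b -> 0 <= eps -> 0 < s -> 4 * b * eps <= s ^+ 2 -> 0 <= E ->
  approx_min X (dual_avg_obj h u eta) 0 x ->
  approx_min X (dual_avg_obj h U b) eps z ->
  dual_bounded nrm (eta *: u - b *: U) E -> nrm (x - z) <= 2 * E + s.
Proof.
move=> eta0 b0 eps0 s0 epss E0 xmin zmin uU.
have := approx_min_growth eta0 xmin zmin.1; rewrite (nrm_distC nrm_norm z).
have := approx_min_growth b0 zmin xmin.1.
have := mulr_dual_avg_obj h u x eta0; have := mulr_dual_avg_obj h u z eta0.
have := mulr_dual_avg_obj h U x b0; have := mulr_dual_avg_obj h U z b0.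
have := uU (z - x); rewrite dotDl dotNl !dotZl !dotBr (nrm_distC nrm_norm z).
have := nrm_ge0 nrm_norm (x - z); nra.
Qed.

Lemma dual_avg_obj_bounded_below u U x eta b E :
  0 < eta -> 0 < b -> approx_min X (dual_avg_obj h u eta) 0 x ->
  dual_bounded nrm (eta *: u - b *: U) E ->
  exists L, forall y, X y -> L <= dual_avg_obj h U b y.
Proof.
move=> eta0 b0 xmin uU.
exists ((eta * dual_avg_obj h u eta x - dot (eta *: u - b *: U) x - E ^+ 2) / b).
move=> y Xy; rewrite ler_pdivrMr // [dual_avg_obj _ _ _ _ * _]mulrC.
have := mulr_dual_avg_obj h U y b0.
have := approx_min_growth eta0 xmin Xy.
have := mulr_dual_avg_obj h u y eta0; have := mulr_dual_avg_obj h u x eta0.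
have : E * nrm (y - x) <= 1 * E ^+ 2 + nrm (y - x) ^+ 2 / 4.
  by apply: young_quad; lra.
have := uU (y - x); rewrite dotBr !dotDl !dotNl !dotZl.
lra.
Qed.

Lemma ftrl_approx_regret N (gr : nat -> 'rV[R]_n) (D b : nat -> R)
    (z : nat -> 'rV[R]_n) p eps :
  (forall t, (1 <= t <= N)%N -> dual_bounded nrm (gr t) (D t)) ->
  (forall t, (1 <= t <= N.+1)%N -> 0 < b t) ->
  (forall t, (1 <= t <= N)%N -> b t.+1 <= b t) ->
  (forall t, (1 <= t <= N)%N ->
     approx_min X (dual_avg_obj h (\sum_(1 <= s < t) gr s) (b t)) eps (z t)) ->
  X p ->
  \sum_(1 <= t < N.+1) dot (gr t) (z t - p)
    <= fine (h p) / b N.+1 + \sum_(1 <= t < N.+1) (b t * D t ^+ 2 + 2 * eps).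
Proof.
move=> grD b_gt0 b_noninc zmin Xp.
pose Psi t := dual_avg_obj h (\sum_(1 <= s < t) gr s) (b t).
(* the leaders followed by the comparator, so that the telescoping sum of
   the be-the-leader steps ends at [Psi N.+1 p] *)
pose w t := if (t <= N)%N then z t else p.
have step t : (1 <= t < N.+1)%N ->
    dot (gr t) (w t) <= Psi t.+1 (w t.+1) - Psi t (w t) + (b t * D t ^+ 2 + 2 * eps).
  rewrite ltnS => t1N; have t1N1 : (1 <= t <= N.+1)%N by case/andP: t1N => -> /leqW.
  have -> : w t = z t by rewrite /w; case/andP: t1N => _ ->.
  have Xw : X (w t.+1).
    by rewrite /w; case: ifP => // tN; apply: (zmin _ _).1; rewrite ltnS tN.
  have bt0 := b_gt0 t t1N1.
  have growth : nrm (w t.+1 - z t) ^+ 2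
      <= 4 * b t * (Psi t (w t.+1) - Psi t (z t) + 2 * eps).
    exact: approx_min_growth bt0 (zmin t t1N) Xw.
  have := young_quad (D t) bt0 growth.
  have := grD t t1N (z t - w t.+1); rewrite dotBr (nrm_distC nrm_norm (z t)).
  have : Psi t (w t.+1) + dot (gr t) (w t.+1) <= Psi t.+1 (w t.+1).
    rewrite /Psi /dual_avg_obj big_nat_recr ?dotDl /=; last by case/andP: t1N.
    have : fine (h (w t.+1)) / b t <= fine (h (w t.+1)) / b t.+1.
      have bt10 : 0 < b t.+1 by apply: b_gt0; rewrite ltnS; case/andP: t1N.
      by rewrite ler_wpM2l ?fine_h_ge0 // lef_pV2 ?posrE // b_noninc.
    lra.
  lra.
rewrite (eq_big_nat _ _ (F2 := fun t => dot (gr t) (w t) - dot (gr t) p)); last first.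
  by move=> t /andP[_ tN]; rewrite dotBr /w -ltnS tN.
rewrite sumrB -dot_suml.
have := ler_sum_nat step; rewrite big_split /= telescope_sumr //.
have -> : Psi N.+1 (w N.+1) = dot (\sum_(1 <= t < N.+1) gr t) p + fine (h p) / b N.+1.
  by rewrite /Psi /w ltnn.
have : 0 <= Psi 1%N (w 1%N).
  by rewrite /Psi /dual_avg_obj big_geq // dot0l add0r divr_ge0 ?fine_h_ge0 ?ltW ?b_gt0.
lra.
Qed.

End Regularizer.

Definition ddda_step (R : realType) (r G a k m A : R) : R :=
  r / (G * Num.sqrt (a * (A + k * m) * m)).

Definition count_before (M : nat -> nat) (t : nat) : nat :=
  (\sum_(1 <= s < t) M s)%N.

Lemma count_beforeS M t :
  (0 < t)%N -> count_before M t.+1 = (count_before M t + M t)%N.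
Proof. by move=> t0; rewrite /count_before big_nat_recr. Qed.

Lemma count_before_le M t t' :
  (t <= t')%N -> (count_before M t <= count_before M t')%N.
Proof.
case: t => [|t] tt'; first by rewrite /count_before big_geq.
by rewrite /count_before (@big_cat_nat _ _ _ t.+1 1 t') //= leq_addr.
Qed.

Section StepSize.
Variables (R : realType) (r G a k m : R).
Hypotheses (r_gt0 : 0 < r) (G_gt0 : 0 < G) (a_gt0 : 0 < a) (k_ge1 : 1 <= k)
  (m_ge1 : 1 <= m).

Let c := r / (G * Num.sqrt a * Num.sqrt m).
Local Notation step := (ddda_step r G a k m).

Let m_gt0 : 0 < m := lt_le_trans ltr01 m_ge1.
Let km_gt0 : 0 < k * m := mulr_gt0 (lt_le_trans ltr01 k_ge1) m_gt0.

Let c_gt0 : 0 < c.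
Proof. by rewrite divr_gt0 // !mulr_gt0 // !sqrtr_gt0. Qed.

Lemma ddda_stepE A : 0 <= A -> step A = c / Num.sqrt (A + k * m).
Proof.
move=> A0; have [ap kmp] := (a_gt0, km_gt0).
by rewrite /ddda_step /c sqrtrM ?mulr_ge0 ?sqrtrM; lra.
Qed.

Lemma ddda_step_gt0 A : 0 <= A -> 0 < step A.
Proof.
move=> A0; have kmp := km_gt0.
by rewrite ddda_stepE // divr_gt0 ?c_gt0 // sqrtr_gt0; lra.
Qed.

Lemma ddda_step_le A B : 0 <= A -> A <= B -> step B <= step A.
Proof.
move=> A0 AB; have kmp := km_gt0; rewrite !ddda_stepE //; last lra.
rewrite ler_wpM2l ?(ltW c_gt0) // lef_pV2 ?posrE ?sqrtr_gt0 ?ler_wsqrtr //; lra.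
Qed.

Lemma ddda_step_gap A B : 0 <= A -> A <= B -> (step A - step B) * A <= step B * (B - A).
Proof.
move=> A0 AB; have kmp := km_gt0; rewrite !ddda_stepE //; last lra.
set x := Num.sqrt (A + k * m); set y := Num.sqrt (B + k * m).
have x0 : 0 < x by rewrite sqrtr_gt0; lra.
have xy : x <= y by rewrite ler_wsqrtr //; lra.
have ex : x ^+ 2 = A + k * m by rewrite sqr_sqrtr //; lra.
have ey : y ^+ 2 = B + k * m by rewrite sqr_sqrtr //; lra.
have gap0 : 0 <= c / x - c / y.
  by rewrite subr_ge0 ler_wpM2l ?(ltW c_gt0) // lef_pV2 ?posrE //; lra.
have -> : B - A = (y - x) * (y + x) by rewrite -subr_sqr ey ex; ring.
apply: le_trans (_ : (c / x - c / y) * x ^+ 2 <= _).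
  by rewrite ler_wpM2l // ex; lra.
have -> : (c / x - c / y) * x ^+ 2 = c / y * ((y - x) * x).
  by field; rewrite !lt0r_neq0 //; lra.
have y0 : 0 < y by lra.
apply: ler_wpM2l; first by rewrite divr_ge0 ?(ltW c_gt0) ?(ltW y0).
apply: ler_wpM2l; lra.
Qed.

Lemma ddda_step_telescope A d : 0 <= A -> 0 < d -> d <= k * m ->
  d * step A <= 2 * c * (Num.sqrt (A + d) - Num.sqrt A).
Proof.
move=> A0 d0 dkm; have kmp := km_gt0; rewrite ddda_stepE //.
set y := Num.sqrt (A + d); set x := Num.sqrt A.
have y0 : 0 < y by rewrite sqrtr_gt0; lra.
have x0 : 0 <= x by apply: sqrtr_ge0.
have ex : x ^+ 2 = A by rewrite sqr_sqrtr.
have ey : y ^+ 2 = A + d by rewrite sqr_sqrtr //; lra.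
apply: le_trans (_ : d * (c / y) <= _).
  apply: ler_wpM2l; first lra.
  apply: ler_wpM2l; first exact: ltW c_gt0.
  rewrite lef_pV2 ?posrE // ?sqrtr_gt0 /y ?ler_wsqrtr; lra.
have -> : d * (c / y) = c * ((y ^+ 2 - x ^+ 2) / y).
  by rewrite ey ex; field; rewrite lt0r_neq0.
have -> : 2 * c * (y - x) = c * (2 * (y - x)) by ring.
by rewrite (ler_pM2l c_gt0) ler_pdivrMr //; nra.
Qed.

Lemma sum_ddda_step_le (M : nat -> nat) (T : nat) :
  (forall t, (1 <= t <= T)%N -> (0 < M t)%N /\ (M t)%:R <= k * m) ->
  \sum_(1 <= t < T.+1) (M t)%:R * step (count_before M t)%:R
    <= 2 * c * Num.sqrt (count_before M T.+1)%:R.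
Proof.
move=> M_bound.
pose sq t : R := Num.sqrt (count_before M t)%:R.
have /ler_sum_nat : forall t, (1 <= t < T.+1)%N ->
    (M t)%:R * step (count_before M t)%:R <= 2 * c * (sq t.+1 - sq t).
  move=> t; rewrite ltnS => /[dup] /andP[t1 _] /M_bound[Mt_gt0 Mt_le].
  by rewrite /sq count_beforeS // natrD ddda_step_telescope ?ltr0n.
have sq1 : sq 1%N = 0 by rewrite /sq /count_before big_geq //= sqrtr0.
by rewrite -mulr_sumr telescope_sumr // sq1 subr0.
Qed.

End StepSize.

Lemma sum_window_le (t tau c : nat) (w : nat -> nat) :
  (forall s, (1 <= s < t)%N -> (w s <= c)%N) ->
  (forall s, (1 <= s)%N -> (s + tau + 1 <= t)%N -> w s = 0%N) ->
  (\sum_(1 <= s < t) w s <= tau * c)%N.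
Proof.
move=> w_le w0.
have sum_le u v : (1 <= u)%N -> (v <= t)%N -> (\sum_(u <= s < v) w s <= (v - u) * c)%N.
  move=> u1 vt; rewrite -sum_nat_const_nat big_nat_cond [X in (_ <= X)%N]big_nat_cond.
  by apply: leq_sum => s /andP[/andP[us sv] _]; apply: w_le; lia.
have [t_small | t_large] := leqP t tau.+1.
  by apply: leq_trans (sum_le _ _ _ _) _ => //; rewrite leq_mul2r; lia.
rewrite (@big_cat_nat _ _ _ (t - tau)) /=; [|lia|lia].
rewrite big_nat_cond big1 => [|s /andP[/andP[s1 st] _]]; last by apply: w0; lia.
by apply: leq_trans (sum_le _ _ _ _) _ => //; [lia | rewrite leq_mul2r; lia].
Qed.

Definition missing (M : nat -> nat) (S : nat -> nat -> pred (nat * nat)) (i t : nat) :=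
  (\sum_(1 <= s < t) \sum_(1 <= j < (M s).+1) (~~ S i t (j, s) : nat))%N.

Lemma cardS_add_missing M S i t : (cardS M S i t + missing M S i t)%N = count_before M t.
Proof.
rewrite /cardS /missing /count_before -big_split; apply: eq_bigr => s _.
rewrite -big_split (eq_bigr (fun=> 1%N)) => [|j _]; last by case: (S i t (j, s)).
by rewrite sum_nat_const_nat subn1 muln1.
Qed.

Lemma feedback_dual_bounded (R : realType) (n : nat) (nrm : 'rV[R]_n -> R) M S
    (g : nat -> nat -> 'rV[R]_n) i t (eta b G : R) :
  is_norm nrm -> b <= eta -> 0 <= b ->
  (forall j s, (1 <= s < t)%N -> (1 <= j <= M s)%N -> dual_bounded nrm (g j s) G) ->
  dual_bounded nrm (eta *: feedback_sum M S g i t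
                    - b *: \sum_(1 <= s < t) \sum_(1 <= j < (M s).+1) g j s)
    (G * ((eta - b) * (cardS M S i t)%:R + b * (missing M S i t)%:R)).
Proof.
move=> nrm_norm b_le b0 g_bd.
pose in_S j s := S i t (j, s).
have -> : G * ((eta - b) * (cardS M S i t)%:R + b * (missing M S i t)%:R)
    = \sum_(1 <= s < t) \sum_(1 <= j < (M s).+1)
        (if in_S j s then (eta - b) * G else b * G).
  rewrite /cardS /missing !natr_sum !mulr_sumr -big_split mulr_sumr.
  apply: eq_bigr => s _; rewrite !natr_sum !mulr_sumr -big_split mulr_sumr.
  by apply: eq_bigr => j _; rewrite /in_S; case: (S i t (j, s)) => /=; ring.
rewrite /feedback_sum !scaler_sumr -sumrB.
rewrite big_nat_cond [X in dual_bounded _ _ X]big_nat_cond.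
apply: dual_bounded_sum => s /andP[st _].
rewrite !scaler_sumr -sumrB big_nat_cond [X in dual_bounded _ _ X]big_nat_cond.
apply: dual_bounded_sum => j /andP[jM _]; rewrite /in_S.
have gjs := g_bd j s st jM.
case: (S i t (j, s)).
  by rewrite -scalerBl; apply: dual_boundedZ; rewrite ?subr_ge0.
by rewrite scaler0 sub0r; apply/(dual_boundedN nrm_norm)/dual_boundedZ.
Qed.

(* With [a = 5 tau + 3 <= 9 k] and [1 + 12 tau <= 12 sqrt (k a)], the two terms
   are at most 3 and 24 times [r G sqrt (k m (N + k m))]. *)
Lemma ddda_terms_le (R : realType) (r G tt k m N hp Sg : R) :
  0 < r -> 0 < G -> 0 <= tt -> k = tt + 1 -> 1 <= m -> 0 <= N ->
  0 <= hp -> hp <= r ^+ 2 ->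
  Sg <= 2 * (r / (G * Num.sqrt (5 * tt + 3) * Num.sqrt m)) * Num.sqrt N ->
  hp / ddda_step r G (5 * tt + 3) k m N + G ^+ 2 * m * (1 + 12 * tt) * Sg
    <= 30 * r * G * Num.sqrt (k * m * (N + k * m)).
Proof.
move=> r0 G0 tt0 kE m1 N0 hp0 hpr Sg_le.
set a := 5 * tt + 3.
have km1 : 1 <= k * m by rewrite kE; nra.
set sa := Num.sqrt a; set sk := Num.sqrt k; set sm := Num.sqrt m.
set sN := Num.sqrt N; set sQ := Num.sqrt (N + k * m).
have sa0 : 0 < sa by rewrite sqrtr_gt0 /a; lra.
have sk0 : 0 < sk by rewrite sqrtr_gt0; lra.
have sm0 : 0 < sm by rewrite sqrtr_gt0; lra.
have sN0 : 0 <= sN by apply: sqrtr_ge0.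
have sQ0 : 0 < sQ by rewrite sqrtr_gt0; lra.
have ea : sa ^+ 2 = a by rewrite sqr_sqrtr /a //; lra.
have ek : sk ^+ 2 = k by rewrite sqr_sqrtr //; lra.
have em : sm ^+ 2 = m by rewrite sqr_sqrtr //; lra.
have sNQ : sN <= sQ by rewrite ler_wsqrtr //; lra.
have sa3 : sa <= 3 * sk.
  have : sa ^+ 2 <= (3 * sk) ^+ 2 by rewrite exprMn ek ea /a; lra.
  by rewrite ler_sqr ?nnegrE //; nra.
have ska : sk <= sa by rewrite ler_wsqrtr // /a; lra.
have -> : Num.sqrt (k * m * (N + k * m)) = sk * sm * sQ.
  by rewrite !sqrtrM ?mulr_ge0 //; lra.
have reg_le : hp / ddda_step r G a k m N <= 3 * sk * (r * G * sm * sQ).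
  have -> : hp / ddda_step r G a k m N = (hp / r) * (G * (sa * sQ * sm)).
    have [a0 Q0] : 0 <= a /\ 0 <= N + k * m by split; rewrite /a; lra.
    rewrite /ddda_step !sqrtrM ?mulr_ge0 // -/sa -/sQ -/sm.
    by field; rewrite !lt0r_neq0.
  have hpr' : hp / r <= r by rewrite ler_pdivrMr // -expr2.
  have GQ0 : 0 <= G * (sa * sQ * sm) by rewrite !mulr_ge0 //; lra.
  apply: le_trans (ler_wpM2r GQ0 hpr') _.
  have -> : r * (G * (sa * sQ * sm)) = sa * (r * G * sm * sQ) by ring.
  by rewrite ler_wpM2r // !mulr_ge0 //; lra.
have coef_le : (1 + 12 * tt) / sa <= 12 * sk.
  rewrite ler_pdivrMr //.
  have : 1 + 12 * tt <= 12 * sk ^+ 2 by rewrite ek; lra.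
  nra.
have drift_le : G ^+ 2 * m * (1 + 12 * tt) * Sg <= 24 * sk * (r * G * sm * sQ).
  have coef0 : 0 <= G ^+ 2 * m * (1 + 12 * tt) by rewrite !mulr_ge0 //; lra.
  apply: le_trans (ler_wpM2l coef0 Sg_le) _.
  have -> : G ^+ 2 * m * (1 + 12 * tt) * (2 * (r / (G * sa * sm)) * sN)
     = 2 * ((1 + 12 * tt) / sa) * (r * G * sm * sN).
    by rewrite -em; field; rewrite !lt0r_neq0.
  have rGN0 : 0 <= r * G * sm * sN by rewrite !mulr_ge0 //; lra.
  have rGNQ : r * G * sm * sN <= r * G * sm * sQ.
    by rewrite ler_wpM2l // !mulr_ge0 //; lra.
  have coef_ge0 : 0 <= (1 + 12 * tt) / sa by rewrite divr_ge0 //; lra.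
  have := ler_pM (mulr_ge0 (ler0n _ 2) coef_ge0) rGN0
    (ler_wpM2l (ler0n _ 2) coef_le) rGNQ.
  lra.
have : 0 <= sk * (r * G * sm * sQ) by rewrite !mulr_ge0 //; lra.
lra.
Qed.

Section DecentralizedDDA.
Variables (R : realType) (n : nat) (nrm : 'rV[R]_n -> R) (X : 'rV[R]_n -> Prop)
  (h : 'rV[R]_n -> \bar R) (T : nat) (M : nat -> nat)
  (S : nat -> nat -> pred (nat * nat)) (f : nat -> nat -> 'rV[R]_n -> R)
  (g x : nat -> nat -> 'rV[R]_n) (eta : nat -> nat -> R) (tau : nat) (G r : R)
  (p : 'rV[R]_n) (jt : nat -> nat).

Local Notation m := ((Mmax M T)%:R : R).
Local Notation k := ((tau.+1)%:R : R).
Local Notation a := (5 * tau%:R + 3 : R).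
Local Notation step := (ddda_step r G a k m).
Local Notation beta t := (step (count_before M t)%:R).
Local Notation round_grad t := (\sum_(1 <= i < (M t).+1) g i t)%R.
Local Notation drift t := (4 * G * beta t * (tau%:R * m)).

Hypotheses (nrm_norm : is_norm nrm) (X_convex : convex_set X)
  (h_reg : regularizer nrm X h).
Hypothesis T_gt0 : (0 < T)%N.
Hypothesis M_gt0 : forall t, (1 <= t <= T)%N -> (1 <= M t)%N.
Hypotheses (G_gt0 : 0 < G) (r_gt0 : 0 < r).
Hypothesis delay_le : forall i t s j, (1 <= t <= T)%N -> (1 <= i <= M t)%N ->
  (1 <= s)%N -> (s + tau + 1 <= t)%N -> (1 <= j <= M s)%N -> S i t (j, s).
Hypothesis f_lipschitz : forall i t, (1 <= t <= T)%N -> (1 <= i <= M t)%N ->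
  lipschitz nrm G (f i t).
Hypothesis g_subgrad : forall i t, (1 <= t <= T)%N -> (1 <= i <= M t)%N ->
  subgrad (f i t) (x i t) (g i t).
Hypothesis eta_step : forall i t, (1 <= t <= T)%N -> (1 <= i <= M t)%N ->
  eta i t = step (cardS M S i t)%:R.
Hypothesis x_ddda : forall i t, (1 <= t <= T)%N -> (1 <= i <= M t)%N ->
  approx_min X (dual_avg_obj h (feedback_sum M S g i t) (eta i t)) 0 (x i t).
Hypothesis jt_agent : forall t, (1 <= t <= T)%N -> (1 <= jt t <= M t)%N.
Hypotheses (p_in_X : X p) (hp_le : (h p <= (r ^+ 2)%:E)%E).

Lemma M_le_Mmax t : (1 <= t <= T)%N -> (M t <= Mmax M T)%N.
Proof.
case/andP=> t1 tT; apply: (@leq_bigmax_seq _ _ xpredT) => //.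
by rewrite mem_index_iota t1 ltnS.
Qed.

Let m_ge1 : 1 <= m.
Proof.
have T1 : (1 <= 1 <= T)%N by rewrite leqnn T_gt0.
by rewrite ler1n (leq_trans (M_gt0 T1) (M_le_Mmax T1)).
Qed.

Let k_ge1 : 1 <= k. Proof. by rewrite ler1n. Qed.

Let a_gt0 : 0 < a. Proof. by rewrite ltr_wpDl ?mulr_ge0. Qed.

Lemma beta_gt0 t : 0 < beta t.
Proof. exact: ddda_step_gt0. Qed.

Lemma beta_le t t' : (t <= t')%N -> beta t' <= beta t.
Proof. by move=> tt'; rewrite ddda_step_le // ler_nat count_before_le. Qed.

Lemma beta_le_eta i t : (1 <= t <= T)%N -> (1 <= i <= M t)%N -> beta t <= eta i t.
Proof.
move=> Ht Hi; rewrite eta_step // ddda_step_le // ler_nat -(cardS_add_missing M S i t).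
exact: leq_addr.
Qed.

Lemma missing_le i t : (1 <= t <= T)%N -> (1 <= i <= M t)%N ->
  (missing M S i t <= tau * Mmax M T)%N.
Proof.
move=> Ht Hi; apply: sum_window_le => [s Hs | s s1 st].
  apply: (@leq_trans (\sum_(1 <= j < (M s).+1) 1)%N).
    by apply: leq_sum => j _; case: (S i t (j, s)).
  by rewrite sum_nat_const_nat subn1 muln1 M_le_Mmax //; move: Hs Ht; lia.
by rewrite big_nat_cond big1 // => j /andP[/andP[j1 jM] _]; rewrite delay_le // j1 -ltnS.
Qed.

Lemma g_dual_bounded i t : (1 <= t <= T)%N -> (1 <= i <= M t)%N ->
  dual_bounded nrm (g i t) G.
Proof.
by move=> Ht Hi; apply: subgrad_lipschitz_dual_bounded (f_lipschitz _ _) (g_subgrad _ _).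
Qed.

(* The scaled local and centralized gradient sums differ by the missing
   gradients and by the stepsize gap, and [ddda_step_gap] bounds the latter by
   the former. *)
Lemma local_central_dual_bounded i t : (1 <= t <= T)%N -> (1 <= i <= M t)%N ->
  dual_bounded nrm (eta i t *: feedback_sum M S g i t
                    - beta t *: \sum_(1 <= s < t) round_grad s)
    (2 * G * beta t * (tau%:R * m)).
Proof.
move=> Ht Hi; have beta0 := ltW (beta_gt0 t).
have g_bd j s : (1 <= s < t)%N -> (1 <= j <= M s)%N -> dual_bounded nrm (g j s) G.
  by move=> Hs; apply: g_dual_bounded; move: Hs Ht; lia.
apply: (dual_bounded_le nrm_norm)
  (feedback_dual_bounded S i nrm_norm (beta_le_eta Ht Hi) beta0 g_bd).
have card_le : (cardS M S i t)%:R <= (count_before M t)%:R :> R.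
  by rewrite ler_nat -(cardS_add_missing M S i t) leq_addr.
have miss_eq : (count_before M t)%:R - (cardS M S i t)%:R = (missing M S i t)%:R :> R.
  by rewrite -(cardS_add_missing M S i t) natrD addrC addKr.
have := ddda_step_gap r_gt0 G_gt0 a_gt0 k_ge1 m_ge1 (ler0n R _) card_le.
rewrite -eta_step // miss_eq => gap.
have miss_le : (missing M S i t)%:R <= tau%:R * m by rewrite -natrM ler_nat missing_le.
have := ler_wpM2l (ltW G_gt0) (ler_wpM2l beta0 miss_le).
have := ler_wpM2l (ltW G_gt0) gap.
lra.
Qed.

Lemma round_grad_dual_bounded t : (1 <= t <= T)%N ->
  dual_bounded nrm (round_grad t) (G * (M t)%:R).
Proof.
move=> Ht; have -> : G * (M t)%:R = \sum_(1 <= i < (M t).+1) G.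
  by rewrite sumr_const_nat subn1 mulr_natr.
rewrite big_nat_cond [X in dual_bounded _ _ X]big_nat_cond.
by apply: dual_bounded_sum => i /andP[Hi _]; apply: g_dual_bounded.
Qed.

Section Leaders.
Variables (z : nat -> 'rV[R]_n) (eps s : R).
Hypothesis z_leader : forall t, (1 <= t <= T)%N ->
  approx_min X (dual_avg_obj h (\sum_(1 <= u < t) round_grad u) (beta t)) eps (z t).
Hypotheses (eps_ge0 : 0 <= eps) (s_gt0 : 0 < s).
Hypothesis eps_small : forall t, (1 <= t)%N -> 4 * beta t * eps <= s ^+ 2.

Lemma dist_leader_le i t : (1 <= t <= T)%N -> (1 <= i <= M t)%N ->
  nrm (x i t - z t) <= drift t + s.
Proof.
move=> Ht Hi; have eta0 : 0 < eta i t by rewrite eta_step // ddda_step_gt0.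
have E0 : 0 <= 2 * G * beta t * (tau%:R * m).
  exact: mulr_ge0 (mulr_ge0 (mulr_ge0 (ler0n _ 2) (ltW G_gt0)) (ltW (beta_gt0 t)))
    (mulr_ge0 (ler0n _ _) (ler0n _ _)).
have := approx_min_dist_le nrm_norm X_convex h_reg eta0 (beta_gt0 t) eps_ge0 s_gt0
  (eps_small (proj1 (andP Ht))) E0 (x_ddda Ht Hi) (z_leader Ht)
  (local_central_dual_bounded Ht Hi).
lra.
Qed.

Lemma instant_regret_le i t : (1 <= t <= T)%N -> (1 <= i <= M t)%N ->
  f i t (x (jt t) t) - f i t p <= dot (g i t) (z t - p) + 3 * G * (drift t + s).
Proof.
move=> Ht Hi.
have dj := dist_leader_le Ht (jt_agent Ht); have di := dist_leader_le Ht Hi.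
have lip : f i t (x (jt t) t) - f i t (x i t) <= G * nrm (x (jt t) t - x i t).
  exact: le_trans (ler_norm _) (f_lipschitz Ht Hi _ _).
have tri : nrm (x (jt t) t - x i t) <= nrm (x (jt t) t - z t) + nrm (x i t - z t).
  rewrite [nrm (x i t - _)](nrm_distC nrm_norm).
  have -> : x (jt t) t - x i t = (x (jt t) t - z t) + (z t - x i t).
    by rewrite addrA subrK.
  exact: ler_nrmD.
have := g_subgrad Ht Hi p; have := g_dual_bounded Ht Hi (x i t - z t).
have -> : p - x i t = - (z t - p) - (x i t - z t) by rewrite !opprB addrA subrK.
rewrite !(dotBr, dotNr).
have := ler_wpM2l (ltW G_gt0) tri; have := ler_wpM2l (ltW G_gt0) dj.
have := ler_wpM2l (ltW G_gt0) di.
lra.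
Qed.

Lemma regret_le_leader_regret : collective_regret T M f x jt p
  <= \sum_(1 <= t < T.+1)
       (dot (round_grad t) (z t - p) + (M t)%:R * (3 * G * (drift t + s))).
Proof.
apply: ler_sum_nat => t; rewrite ltnS => Ht.
apply: le_trans (_ : _ <= \sum_(1 <= i < (M t).+1)
  (dot (g i t) (z t - p) + 3 * G * (drift t + s))) _.
  by apply: ler_sum_nat => i; rewrite ltnS => Hi; apply: instant_regret_le.
by rewrite big_split /= dot_suml sumr_const_nat subn1 /= [(M t)%:R * _]mulr_natl.
Qed.

Lemma regret_le_leaders : collective_regret T M f x jt p
  <= fine (h p) / beta T.+1
     + G ^+ 2 * m * (1 + 12 * tau%:R) * \sum_(1 <= t < T.+1) (M t)%:R * beta t
     + (T%:R * (2 * eps) + 3 * G * s * (Ntot M T)%:R).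
Proof.
apply: le_trans regret_le_leader_regret _; rewrite big_split /=.
have := ftrl_approx_regret nrm_norm X_convex h_reg (D := fun t => G * (M t)%:R)
  (b := fun t => beta t) round_grad_dual_bounded (fun t _ => beta_gt0 t)
  (fun t _ => beta_le (leqnSn t)) z_leader p_in_X.
suff : \sum_(1 <= t < T.+1) (beta t * (G * (M t)%:R) ^+ 2 + 2 * eps)
     + \sum_(1 <= t < T.+1) (M t)%:R * (3 * G * (drift t + s))
   <= G ^+ 2 * m * (1 + 12 * tau%:R) * \sum_(1 <= t < T.+1) (M t)%:R * beta t
      + (T%:R * (2 * eps) + 3 * G * s * (Ntot M T)%:R) by lra.
rewrite -big_split /=.
apply: le_trans (_ : _ <= \sum_(1 <= t < T.+1) (G ^+ 2 * m * (1 + 12 * tau%:R)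
  * ((M t)%:R * beta t) + 2 * eps + 3 * G * s * (M t)%:R)) _.
  apply: ler_sum_nat => t; rewrite ltnS => Ht.
  have Mm : (M t)%:R <= m by rewrite ler_nat M_le_Mmax.
  have BGM0 : 0 <= beta t * G ^+ 2 * (M t)%:R.
    exact: mulr_ge0 (mulr_ge0 (ltW (beta_gt0 t)) (sqr_ge0 G)) (ler0n _ _).
  have := ler_wpM2l BGM0 Mm; lra.
rewrite !big_split /= -!mulr_sumr !sumr_const_nat subn1 /Ntot natr_sum -mulr_natl.
lra.
Qed.

End Leaders.

Lemma exists_leaders eps : 0 < eps -> exists z : nat -> 'rV[R]_n,
  forall t, (1 <= t <= T)%N ->
  approx_min X (dual_avg_obj h (\sum_(1 <= u < t) round_grad u) (beta t)) eps (z t).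
Proof.
move=> eps0.
have leader (t : 'I_T.+1) : exists zt, (1 <= t)%N ->
    approx_min X (dual_avg_obj h (\sum_(1 <= u < t) round_grad u) (beta t)) eps zt.
  have [t0 | t1] := posnP t; first by exists 0; rewrite t0.
  have Ht : (1 <= t <= T)%N by rewrite t1 -ltnS ltn_ord.
  have H1 : (1 <= 1 <= M t)%N by rewrite leqnn M_gt0.
  have eta0 : 0 < eta 1%N t by rewrite eta_step // ddda_step_gt0.
  have [L HL] := dual_avg_obj_bounded_below X_convex h_reg eta0
    (beta_gt0 t) (x_ddda Ht H1) (local_central_dual_bounded Ht H1).
  by have [zt ?] := exists_approx_min eps0 p_in_X HL; exists zt.
have [z zP] := fin_all_exists leader.
exists (fun t => z (inord t)) => t /andP[t1 tT].
by have := zP (inord t); rewrite inordK ?ltnS //; apply.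
Qed.

(* Exact minimizers of the centralized objective need not exist; using
   [s^2 / (4 beta 1)]-minimizers costs [O(s)] regret, and [s] is arbitrary. *)
Lemma regret_le_slack s : 0 < s <= 1 -> collective_regret T M f x jt p
  <= fine (h p) / beta T.+1
     + G ^+ 2 * m * (1 + 12 * tau%:R) * \sum_(1 <= t < T.+1) (M t)%:R * beta t
     + s * (T%:R / (2 * beta 1%N) + 3 * G * (Ntot M T)%:R).
Proof.
case/andP=> s0 s1; have b1 := beta_gt0 1.
set eps := s ^+ 2 / (4 * beta 1%N).
have eps0 : 0 < eps := divr_gt0 (exprn_gt0 _ s0) (mulr_gt0 (ltr0Sn _ 3) b1).
have eps_small t : (1 <= t)%N -> 4 * beta t * eps <= s ^+ 2.
  move=> t1; have -> : s ^+ 2 = 4 * beta 1%N * eps by rewrite /eps; field; lra.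
  by apply: (ler_wpM2r (ltW eps0)); apply: ler_wpM2l => //; apply: beta_le.
have [z z_leader] := exists_leaders eps0.
have := regret_le_leaders z_leader (ltW eps0) s0 eps_small.
have -> : T%:R * (2 * eps) = s ^+ 2 * (T%:R / (2 * beta 1%N)) by rewrite /eps; field; lra.
have : s ^+ 2 * (T%:R / (2 * beta 1%N)) <= s * (T%:R / (2 * beta 1%N)).
  apply: ler_wpM2r; first by rewrite divr_ge0 // mulr_ge0 // ltW.
  by rewrite expr2 ler_piMr // ltW.
lra.
Qed.

Lemma ddda_regret_le : collective_regret T M f x jt p
  <= 30 * r * G * Num.sqrt (k * m * ((Ntot M T)%:R + k * m)).
Proof.
have b1 := beta_gt0 1.
apply: (@ler_of_slack _ _ _ (T%:R / (2 * beta 1%N) + 3 * G * (Ntot M T)%:R)).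
  exact: addr_ge0 (divr_ge0 (ler0n _ _) (mulr_ge0 (ler0n _ 2) (ltW b1)))
    (mulr_ge0 (mulr_ge0 (ler0n _ 3) (ltW G_gt0)) (ler0n _ _)).
move=> s /regret_le_slack /le_trans; apply; rewrite lerD2r.
apply: ddda_terms_le => //.
- by rewrite natr1.
- exact: fine_h_ge0 h_reg p.
- by move: hp_le; rewrite (h_fineK h_reg p_in_X) lee_fin.
- apply: sum_ddda_step_le => // t Ht; split; first exact: M_gt0.
  rewrite -natrM ler_nat (leq_trans (M_le_Mmax Ht)) // leq_pmull //.
Qed.

End DecentralizedDDA.

Theorem theorem4 (R : realType) :
  exists C : R, forall (n : nat) (nrm : 'rV[R]_n -> R) (X : 'rV[R]_n -> Prop)
    (h : 'rV[R]_n -> \bar R)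
    (T : nat) (M : nat -> nat) (S : nat -> nat -> pred (nat * nat))
    (f : nat -> nat -> 'rV[R]_n -> R) (g x : nat -> nat -> 'rV[R]_n)
    (eta : nat -> nat -> R) (tau : nat) (G r : R) (p : 'rV[R]_n)
    (jt : nat -> nat),
  is_norm nrm -> closed_set nrm X -> convex_set X ->
  regularizer nrm X h ->
  (forall t, (1 <= t <= T)%N -> (1 <= M t)%N) ->
  0 < G -> 0 < r ->
  (* the feedback sets only contain past (agent, time) indices *)
  (forall i t js, (1 <= t <= T)%N -> (1 <= i <= M t)%N ->
     S i t js -> valid_pairs M t js) ->
  (* |S^j_s| < |S^i_t| whenever (j,s) \in S^i_t *)
  (forall i t j s, (1 <= t <= T)%N -> (1 <= i <= M t)%N ->
     S i t (j, s) -> (cardS M S j s < cardS M S i t)%N) ->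
  (* maximum delay bounded by tau *)
  (forall i t s j, (1 <= t <= T)%N -> (1 <= i <= M t)%N ->
     (1 <= s)%N -> (s + tau + 1 <= t)%N -> (1 <= j <= M s)%N -> S i t (j, s)) ->
  (* convex, G-Lipschitz losses and shared subgradients *)
  (forall i t, (1 <= t <= T)%N -> (1 <= i <= M t)%N ->
     [/\ convex_fun (f i t), lipschitz nrm G (f i t)
       & subgrad (f i t) (x i t) (g i t)]) ->
  (* stepsizes *)
  (forall i t, (1 <= t <= T)%N -> (1 <= i <= M t)%N ->
     eta i t = r / (G * Num.sqrt ((5 * tau%:R + 3) *
                 ((cardS M S i t)%:R + (tau.+1)%:R * (Mmax M T)%:R) *
                 (Mmax M T)%:R))) ->
  (* D-DDA: x^i_t minimizes <sum of feedback, x> + h(x)/eta^i_t over X *)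
  (forall i t, (1 <= t <= T)%N -> (1 <= i <= M t)%N ->
     X (x i t) /\
     forall y, X y ->
       dot (feedback_sum M S g i t) (x i t) + fine (h (x i t)) / eta i t <=
       dot (feedback_sum M S g i t) y + fine (h y) / eta i t) ->
  (* reference agents *)
  (forall t, (1 <= t <= T)%N -> (1 <= jt t <= M t)%N) ->
  X p -> (h p <= (r ^+ 2)%:E)%E ->
  collective_regret T M f x jt p <=
    C * r * G * Num.sqrt ((tau.+1)%:R * (Mmax M T)%:R *
                          ((Ntot M T)%:R + (tau.+1)%:R * (Mmax M T)%:R)).
Proof.
exists 30 => n nrm X h T M S f g x eta tau G r p jt nrm_norm _ X_convex h_reg M_gt0
  G_gt0 r_gt0 _ _ delay_le f_prop eta_step x_min jt_agent p_in_X hp_le.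
have [-> | T_gt0] := posnP T.
  rewrite /collective_regret big_geq // !mulr_ge0 ?sqrtr_ge0 //; lra.
apply: (ddda_regret_le nrm_norm X_convex h_reg T_gt0 M_gt0 G_gt0 r_gt0 delay_le
  _ _ eta_step) => // [i t Ht Hi | i t Ht Hi | i t Ht Hi].
- by have [_ ? _] := f_prop i t Ht Hi.
- by have [_ _ ?] := f_prop i t Ht Hi.
- have [Xx xmin] := x_min i t Ht Hi; split=> // y Xy; rewrite addr0; exact: xmin.
Qed.
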